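(* Let $N$ be a positive integer power of two and $j=\sqrt{-1}$. Let $\mathbf{\Phi}$ be the $N\times N$ discrete Fresnel transform matrix with entries (indices $m,n=0,\dots,N-1$) $$[\mathbf{\Phi}]_{m,n}=\frac{1}{\sqrt{N}}\,e^{-j\frac{\pi}{4}}\,e^{j\frac{\pi}{N}(n-m)^2},$$ let $\mathbf{\Delta}=\mathrm{diag}\left(e^{j\frac{2\pi}{N}\cdot 0},e^{j\frac{2\pi}{N}\cdot 1},\dots,e^{j\frac{2\pi}{N}(N-1)}\right)$, and let $\mathbf{\Pi}$ be the $N\times N$ cyclic permutation matrix with $[\mathbf{\Pi}]_{m,n}=1$ if $m\equiv n+1\pmod N$ and $0$ otherwise. Then for every integer $k$, $$\mathbf{\Phi}\mathbf{\Delta}^k\mathbf{\Phi}^H=e^{j\frac{\pi}{N}k^2}\,\mathbf{\Pi}^k\mathbf{\Delta}^k .$$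
   Context: $\mathbf{\Phi}^H$ denotes the conjugate transpose of $\mathbf{\Phi}$; $\mathbf{\Phi}$ is unitary ($\mathbf{\Phi}^H\mathbf{\Phi}=\mathbf{I}_N$). Negative powers denote powers of the inverse matrix. Equivalently, $\mathbf{\Phi}=\mathbf{\Theta}_2\mathbf{F}\mathbf{\Theta}_1$ where $\mathbf{F}$ is the unitary DFT matrix $[\mathbf{F}]_{m,n}=\frac{1}{\sqrt N}e^{-j2\pi mn/N}$, $\mathbf{\Theta}_1=\mathrm{diag}(e^{-j\pi/4}e^{j\pi m^2/N})_m$, $\mathbf{\Theta}_2=\mathrm{diag}(e^{j\pi m^2/N})_m$. *)

From HB Require Import structures.
From mathcomp Require Import all_boot all_order all_algebra.
From mathcomp Require Import all_classical all_reals.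
From mathcomp Require Import trigo.
From mathcomp Require Import complex.
Set Implicit Arguments. Unset Strict Implicit. Unset Printing Implicit Defensive.
Import Order.TTheory GRing.Theory Num.Theory.
Local Open Scope ring_scope.
Local Open Scope complex_scope.

Definition cexpj (R : realType) (x : R) : R[i] := cos x +i* sin x.

Definition fresnel_mx (R : realType) (n : nat) : 'M[R[i]]_n.+1 :=
  \matrix_(m < n.+1, l < n.+1)
    ((Num.sqrt (n.+1)%:R : R)^-1%:C * cexpj (- (pi / 4%:R))
     * cexpj (pi / (n.+1)%:R * ((l%:Z - m%:Z) ^+ 2)%:~R)).

Definition Delta_mx (R : realType) (n : nat) : 'M[R[i]]_n.+1 :=
  diag_mx (\row_(m < n.+1) cexpj (2%:R * pi / (n.+1)%:R * m%:R)).

Definition Pi_mx (R : realType) (n : nat) : 'M[R[i]]_n.+1 :=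
  \matrix_(m < n.+1, l < n.+1) (if (m : nat) == (l.+1 %% n.+1)%N then 1 else 0).

Definition adjmx (R : realType) (m l : nat) (A : 'M[R[i]]_(m, l)) : 'M[R[i]]_(l, m) :=
  (map_mx (fun z => z^*) A)^T.

(* Entry (m, r) of Phi diag(w) Phi^H is
     (1/N) e^{j pi (m^2 - r^2)/N} sum_l w_l e^{j 2 pi (r - m) l/N},
   since the terms quadratic in l of the two Fresnel factors cancel.  For w = Delta^k the sum is
   a geometric sum of N-th roots of unity: it is N when m = r + k (mod N), the support of
   Pi^k Delta^k, and 0 otherwise.  On that support the phase e^{j pi (m^2 - r^2)/N} equals
   e^{j pi k^2/N} e^{j 2 pi r k/N}, because the chirp x |-> e^{j pi x^2/N} is N-periodic on the
   integers when N is even; evenness is all that is used of N = 2^p. *)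

From HB Require Import structures.
From mathcomp Require Import all_boot all_order all_algebra.
From mathcomp Require Import all_classical all_reals.
From mathcomp Require Import trigo.
From mathcomp Require Import complex.
From mathcomp Require Import ring lra.
Import Order.TTheory GRing.Theory Num.Theory.
Local Open Scope ring_scope.
Local Open Scope complex_scope.
Set Implicit Arguments.
Unset Strict Implicit.
Unset Printing Implicit Defensive.

Section ComplexExponential.
Variable R : realType.
Implicit Types x y : R.

Lemma cexpj0 : cexpj (0 : R) = 1.
Proof. by rewrite /cexpj cos0 sin0. Qed.

Lemma cexpjD x y : cexpj (x + y) = cexpj x * cexpj y.
Proof. by rewrite /cexpj cosD sinD; simpc; congr (_ +i* _); ring. Qed.

Lemma cexpj_neq0 x : cexpj x != 0.
Proof.
apply/negP => /eqP ex0; have := cexpjD x (- x).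
by rewrite subrr cexpj0 ex0 mul0r; apply/eqP; rewrite oner_eq0.
Qed.

Lemma cexpjN x : cexpj (- x) = (cexpj x)^-1.
Proof. by apply/esym/mulr1_eq; rewrite -cexpjD subrr cexpj0. Qed.

Lemma conj_cexpj x : (cexpj x)^* = cexpj (- x).
Proof. by rewrite /cexpj cosN sinN. Qed.

Lemma cexpjMn x l : cexpj (x *+ l) = cexpj x ^+ l.
Proof. by elim: l => [|l IHl]; rewrite ?cexpj0 // mulrSr cexpjD IHl exprSr. Qed.

Lemma cexpjMz x (z : int) : cexpj (x * z%:~R) = cexpj x ^ z.
Proof.
case: z => l; first by rewrite mulr_natr cexpjMn.
by rewrite NegzE mulrNz mulrN cexpjN mulr_natr cexpjMn.
Qed.

Lemma cexpj_2piz (z : int) : cexpj (2%:R * pi * z%:~R : R) = 1.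
Proof. by rewrite cexpjMz mulr_natl /cexpj cos2pi sin2pi exp1rz. Qed.

Lemma cexpj_neq1 x : 0 < x < 2%:R * pi -> cexpj x != 1.
Proof.
move=> /andP[x_gt0 x_lt2pi]; apply/negP => /eqP/(congr1 (@complex.Re R)) /=.
(* cos x = 1 - 2 sin (x/2) ^ 2 and sin (x/2) > 0 *)
have -> : x = (x / 2%:R) *+ 2 by rewrite -mulr_natr divfK ?pnatr_eq0.
rewrite cos_mulr2n.
have : 0 < sin (x / 2%:R) by apply: sin_gt0_pi; apply/andP; split; lra.
have := sin2cos2 (x / 2%:R); nra.
Qed.

Lemma cexpj_root_neq1 (N : nat) (d : int) : (0 < N)%N -> ~~ (N%:Z %| d)%Z ->
  cexpj (2%:R * pi / N%:R * d%:~R : R) != 1.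
Proof.
move=> N_gt0 N_ndvd_d; have N_neq0 : N%:R != 0 :> R by rewrite pnatr_eq0 -lt0n.
set r := (d %% N)%Z.
have r_gt0 : 0 < r.
  rewrite lt0r modz_ge0 ?andbT ?eqz_nat -?lt0n //.
  by apply: contra N_ndvd_d => /eqP/dvdz_mod0P.
have r_ltN : r < N by rewrite ltz_pmod // ltz_nat.
have -> : 2%:R * pi / N%:R * d%:~R =
           2%:R * pi / N%:R * r%:~R + 2%:R * pi * (d %/ N)%Z%:~R :> R.
  by rewrite {1}(divz_eq d N) intrD intrM /=; field.
rewrite cexpjD cexpj_2piz mulr1 cexpj_neq1 //.
have t_gt0 : 0 < 2%:R * pi / N%:R :> R by rewrite divr_gt0 ?mulr_gt0 ?pi_gt0 ?ltr0n.
have tN : 2%:R * pi / N%:R * N%:R = 2%:R * pi :> R by rewrite divfK.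
have r_gt0R : 0 < r%:~R :> R by rewrite ltr0z.
have r_ltNR : r%:~R < N%:R :> R by rewrite -[N%:R]/(N%:Z%:~R) ltr_int.
apply/andP; split; nra.
Qed.

Lemma sum_cexpj_root (N : nat) (d : int) : (0 < N)%N ->
  \sum_(l < N) cexpj (2%:R * pi / N%:R * d%:~R * l%:R : R) =
  if (N%:Z %| d)%Z then N%:R else 0.
Proof.
move=> N_gt0; have N_neq0 : N%:R != 0 :> R by rewrite pnatr_eq0 -lt0n.
under eq_bigr do rewrite mulr_natr cexpjMn.
set z := cexpj (2%:R * pi / N%:R * d%:~R : R).
case: ifPn => [/dvdzP[q d_eq] | N_ndvd_d].
  have -> : z = 1.
    by rewrite /z d_eq intrM mulrA mulrAC -[(N%:Z)%:~R]/(N%:R : R) divfK // cexpj_2piz.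
  by under eq_bigr do rewrite expr1n; rewrite sumr_const card_ord.
have zN : z ^+ N = 1.
  by rewrite -cexpjMn -[X in cexpj X]mulr_natr mulrAC divfK // cexpj_2piz.
have := subrX1 z N; rewrite zN subrr => /esym/eqP.
by rewrite mulf_eq0 subr_eq0 (negbTE (cexpj_root_neq1 N_gt0 N_ndvd_d)) => /eqP.
Qed.

End ComplexExponential.

Lemma exprz_recE (R : unitRingType) (x : R) (f : int -> R) :
  x \is a GRing.unit -> f 0 = 1 -> (forall k, f (k + 1) = f k * x) ->
  forall k, x ^ k = f k.
Proof.
move=> x_unit f0 fS.
have fD (k : int) (m : nat) : f (k + m%:Z) = f k * x ^+ m.
  elim: m => [|m IHm]; first by rewrite addr0 mulr1.
  by rewrite intS addrCA addrC fS IHm exprSr mulrA.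
case=> m; first by rewrite -[Posz m]add0r fD f0 mul1r.
have : f (Negz m) * x ^+ m.+1 = 1 by rewrite -fD NegzE addNr f0.
by move/(congr1 (fun y => y / x ^+ m.+1)); rewrite mulrK ?unitrX // div1r.
Qed.

Lemma mx_exprz_recE (R : comUnitRingType) (n : nat) (X : 'M[R]_n.+1)
    (f : int -> 'M[R]_n.+1) :
  f 0 = 1 -> (forall k, f (k + 1) = f k * X) -> forall k, X ^ k = f k.
Proof.
move=> f0 fS; apply: exprz_recE => //.
have : f (-1) *m X = 1%:M by rewrite mulmxE -fS addNr f0.
by case/mulmx1_unit.
Qed.

Section Fresnel.
Variables (R : realType) (n : nat).
Local Notation N := n.+1.

Lemma Delta_mx_exprz (k : int) :
  Delta_mx R n ^ k = diag_mx (\row_(m < N) cexpj (2%:R * pi / N%:R * m%:R * k%:~R)).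
Proof.
move: k; apply: mx_exprz_recE => [|k].
  by apply/matrixP => i j; rewrite !mxE mulr0 cexpj0.
rewrite /Delta_mx -mulmxE mulmx_diag; congr diag_mx; apply/rowP => m.
by rewrite !mxE -cexpjD intrD mulrDr mulr1.
Qed.

Lemma Pi_mx_exprz (k : int) :
  Pi_mx R n ^ k =
  \matrix_(m < N, l < N) (if (m%:Z == l%:Z + k %[mod N])%Z then 1 else 0).
Proof.
move: k; apply: mx_exprz_recE => [|k].
  apply/matrixP => m l; rewrite !mxE addr0 !modz_nat eqz_nat !modn_small //.
  by rewrite val_eqE; case: (m == l).
apply/matrixP => m l; rewrite -mulmxE !mxE.
pose l' : 'I_N := Ordinal (ltn_pmod l.+1 (ltn0Sn n)).
rewrite (bigD1 l') //= big1 => [|j /negbTE j_neq_l']; last first.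
  by rewrite [Pi_mx R n j l]mxE ifF ?mulr0 //; exact: j_neq_l'.
rewrite !mxE eqxx mulr1 addr0 /= -modz_nat modzDml.
by rewrite (_ : l.+1%:Z + k = l%:Z + (k + 1)) // intS; ring.
Qed.

(* [chirp m] is the m-th diagonal entry of Theta_2 in Phi = Theta_2 F Theta_1. *)
Definition chirp (x : R) : R[i] := cexpj (pi / N%:R * x ^+ 2).

Lemma chirpD x y :
  chirp (x + y) = chirp x * chirp y * cexpj (2%:R * pi / N%:R * x * y).
Proof. by rewrite /chirp -!cexpjD; congr cexpj; ring. Qed.

Lemma chirp_periodic (x t : int) : ~~ odd N -> chirp (x + t * N%:Z)%:~R = chirp x%:~R.
Proof.
move=> N_even; have [h N_eq] : exists h, N = h.*2.
  by exists N./2; rewrite -[LHS]odd_double_half (negbTE N_even).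
have h_neq0 : h%:R != 0 :> R by rewrite pnatr_eq0 -double_eq0 -N_eq.
rewrite intrD chirpD.
have -> : chirp (t * N%:Z)%:~R = 1.
  rewrite /chirp (_ : _ * _ = 2%:R * pi * (t ^+ 2 * h%:Z)%:~R) ?cexpj_2piz //.
  by rewrite !intrM -!pmulrn N_eq -mul2n natrM; field.
rewrite (_ : _ * _ = 2%:R * pi * (x * t)%:~R) ?cexpj_2piz ?mulr1 //.
by rewrite !intrM -!pmulrn N_eq -mul2n natrM; field.
Qed.

Lemma fresnel_conj_diag (w : 'rV[R[i]]_N) (m r : 'I_N) :
  (fresnel_mx R n *m diag_mx w *m adjmx (fresnel_mx R n)) m r =
  (N%:R)^-1 * (chirp m%:R / chirp r%:R) *
  \sum_(l < N) w 0 l * cexpj (2%:R * pi / N%:R * (r%:R - m%:R) * l%:R).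
Proof.
rewrite mul_mx_diag mxE mulr_sumr; apply: eq_bigr => l _; rewrite !mxE.
set s := (Num.sqrt N%:R : R)^-1.
have s2 : s%:C * s%:C = (N%:R)^-1 :> R[i].
  by rewrite -rmorphM -invfM -expr2 sqr_sqrtr ?ler0n // fmorphV rmorph_nat.
rewrite !(conjc_is_multiplicative _).1 conjc_real !conj_cexpj opprK.
set u := cexpj (pi / N%:R * ((l%:Z - m%:Z) ^+ 2)%:~R).
set v := cexpj (- (pi / N%:R * ((l%:Z - r%:Z) ^+ 2)%:~R)).
have phase : u * v =
    chirp m%:R / chirp r%:R * cexpj (2%:R * pi / N%:R * (r%:R - m%:R) * l%:R).
  rewrite /u /v /chirp -cexpjN -!cexpjD; congr cexpj.
  by rewrite !rmorphXn /= !intrB -!pmulrn; ring.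
transitivity (s%:C * s%:C * (cexpj (- (pi / 4%:R)) * cexpj (pi / 4%:R)) * (u * v) * w 0 l).
  by ring.
by rewrite s2 -cexpjD addNr cexpj0 mulr1 phase; ring.
Qed.

Theorem fresnel_conj_Delta_exprz (k : int) : ~~ odd N ->
  fresnel_mx R n * Delta_mx R n ^ k * adjmx (fresnel_mx R n) =
  chirp k%:~R *: (Pi_mx R n ^ k * Delta_mx R n ^ k).
Proof.
move=> N_even; have N_neq0 : N%:R != 0 :> R[i] by rewrite pnatr_eq0.
rewrite Delta_mx_exprz Pi_mx_exprz -!mulmxE; apply/matrixP => m r.
rewrite fresnel_conj_diag mul_mx_diag !mxE.
rewrite (eq_bigr (fun l : 'I_N =>
    cexpj (2%:R * pi / N%:R * (k + r%:Z - m%:Z)%:~R * l%:R))); last first.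
  by move=> l _; rewrite !mxE -cexpjD intrB intrD -!pmulrn; congr cexpj; ring.
rewrite sum_cexpj_root // eqz_mod_dvd.
rewrite (_ : m%:Z - (r%:Z + k) = - (k + r%:Z - m%:Z)); last by ring.
rewrite rpredN; case: ifPn => [/dvdzP[t mE] | _]; last by rewrite !(mulr0, mul0r).
have -> : (m%:R : R) = (r%:Z + k + (- t) * N%:Z)%:~R.
  by rewrite mulNr -mE -[m%:R]/((m%:Z)%:~R : R); congr intmul; ring.
rewrite chirp_periodic // intrD chirpD -!pmulrn.
have chirp_neq0 : chirp r%:R != 0 by exact: cexpj_neq0.
by field; rewrite chirp_neq0 -mulrS N_neq0.
Qed.

End Fresnel.

Theorem lemma2 (R : realType) (n p : nat) (hp : (0 < p)%N) (hN : n.+1 = (2 ^ p)%N)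
  (k : int) :
  fresnel_mx R n * (Delta_mx R n) ^ k * adjmx (fresnel_mx R n)
  = cexpj (pi / (n.+1)%:R * (k ^+ 2)%:~R) *: ((Pi_mx R n) ^ k * (Delta_mx R n) ^ k).
Proof.
have N_even : ~~ odd n.+1 by rewrite hN -(prednK hp) expnS oddM.
by rewrite fresnel_conj_Delta_exprz // /chirp rmorphXn.
Qed.
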